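(* Let $a\in\mathbb{C}$ with $0<|a|<1$, $M\in\mathbb{N}$ (a positive integer), and $\varphi(z)=az^M$. Define $\nu=\left\lfloor\frac{2-|a|}{1-|a|}\right\rfloor$ and $\mathcal{N}_M=\max\{1,\,M(\nu-1)|a|^{\nu-1}\}$. Then the operator norm of $D_\varphi$ acting on the Hilbert space $S^2$ is $\|D_\varphi\|=\mathcal{N}_M$.
   Context: $\mathbb{D}$ is the open unit disk. $S^2$ is the Hilbert space of analytic functions $f(z)=\sum_{n\ge0}a_nz^n$ on $\mathbb{D}$ with $\|f\|_{S^2}^2=|a_0|^2+\sum_{n\ge1}n^2|a_n|^2<\infty$ (equivalently $\|f\|_{S^2}^2=|f(0)|^2+\|f'\|_{H^2}^2$). $D_\varphi f=f'\circ\varphi$. *)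

From Stdlib Require Import Reals.
From Coquelicot Require Import Coquelicot.
Open Scope R_scope.

Definition has_coeffs (f : C -> C) (c : nat -> C) : Prop :=
  forall z : C, Cmod z < 1 ->
    is_series (K := C_AbsRing) (V := C_NormedModule)
      (fun n => (c n * Cpow z n)%C) (f z).

Definition S2_weight (c : nat -> C) (n : nat) : R := (INR n)^2 * (Cmod (c n))^2.

Definition in_S2 (f : C -> C) : Prop :=
  exists c, has_coeffs f c /\ ex_series (S2_weight c).

Definition is_S2norm (f : C -> C) (r : R) : Prop :=
  exists c s, has_coeffs f c /\ is_series (S2_weight c) s /\
    r = sqrt ((Cmod (c 0%nat))^2 + s).

Definition is_Dphi (phi : C -> C) (f g : C -> C) : Prop :=
  forall z : C, Cmod z < 1 ->
    is_derive (K := C_AbsRing) (V := C_NormedModule) f (phi z) (g z).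

Definition Dphi_opnorm (phi : C -> C) : Rbar :=
  Lub_Rbar (fun r => exists f g rf, in_S2 f /\ is_S2norm f rf /\ rf <= 1 /\
                       is_Dphi phi f g /\ in_S2 g /\ is_S2norm g r).

Definition nu_of (a : C) : nat :=
  Z.to_nat (floor ((2 - Cmod a) / (1 - Cmod a))).

Definition N_M (a : C) (M : nat) : R :=
  Rmax 1 (INR M * (INR (nu_of a) - 1) * (Cmod a) ^ (nu_of a - 1)).

(* If f = sum_n c_n z^n, then D_phi f (z) = sum_m (m+1) c_(m+1) a^m z^(M m) is a lacunary
   series, so ||D_phi f||^2 = |c_1|^2 + sum_(m>=1) (M m |a|^m)^2 (m+1)^2 |c_(m+1)|^2.
   The factor m |a|^m increases while (m+1)(1-|a|) <= 1 and decreases afterwards, so it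
   is maximal at m = nu - 1; hence every weight of f is multiplied by at most N_M^2 and
   ||D_phi|| <= N_M.  The norm-one functions z and z^nu / nu attain the two values 1 and
   M (nu-1) |a|^(nu-1) of which N_M is the maximum. *)

From Stdlib Require Import Arith Reals Lra Lia Psatz Classical ClassicalEpsilon.
From Coquelicot Require Import Coquelicot.
Open Scope R_scope.

Lemma sum_n_eq_last {G : AbelianMonoid} (a : nat -> G) k :
  (forall j, (j < k)%nat -> a j = zero) -> sum_n a k = a k.
Proof.
  induction k as [|k IH]; intros Ha; [apply sum_O|].
  rewrite sum_Sn, IH, (Ha k) by (lia || (intros j Hj; apply Ha; lia)). apply plus_zero_l.
Qed.

Lemma is_series_single {K : AbsRing} {V : NormedModule K} (a : nat -> V) n :
  (forall j, j <> n -> a j = zero) -> is_series a (a n).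
Proof.
  intros Ha.
  assert (Habove : forall d, sum_n a (n + d) = a n).
  { induction d as [|d IH].
    - rewrite Nat.add_0_r. apply sum_n_eq_last. intros j Hj. apply Ha. lia.
    - rewrite Nat.add_succ_r, sum_Sn, IH, (Ha (S (n + d))) by lia. apply plus_zero_r. }
  intros P HP. exists n. intros N HN.
  replace N with (n + (N - n))%nat by lia. rewrite Habove.
  exact (locally_singleton _ _ HP).
Qed.

Lemma is_series_le (a b : nat -> R) la lb :
  is_series a la -> is_series b lb -> (forall n, a n <= b n) -> la <= lb.
Proof.
  intros Ha Hb Hab.
  apply (is_lim_seq_le (sum_n a) (sum_n b) la lb); auto.
  intros N. apply sum_n_m_le, Hab.
Qed.

Lemma is_series_nonneg (a : nat -> R) l : (forall n, 0 <= a n) -> is_series a l -> 0 <= l.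
Proof.
  intros Ha Hl. apply (is_series_le (fun _ => 0) a); auto.
  exact (is_series_single (V := R_NormedModule) (fun _ => 0) 0 (fun _ _ => eq_refl)).
Qed.

Lemma is_series_term_le (a : nat -> R) l :
  (forall n, 0 <= a n) -> is_series a l -> forall n, a n <= l.
Proof.
  intros Ha Hl n.
  set (b := fun j => if Nat.eqb j n then a n else 0).
  assert (Hb : is_series b (a n)).
  { replace (a n) with (b n) by (unfold b; now rewrite Nat.eqb_refl).
    apply (is_series_single (V := R_NormedModule)). intros j Hj. unfold b.
    now rewrite (proj2 (Nat.eqb_neq j n) Hj). }
  apply (is_series_le b a); auto.
  intros j. unfold b. destruct (Nat.eqb_spec j n); [subst; lra|auto].
Qed.

Lemma is_series_norm_le {K : AbsRing} {V : NormedModule K} (a : nat -> V) (b : nat -> R) la lb :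
  is_series a la -> is_series b lb -> (forall n, norm (a n) <= b n) -> norm la <= lb.
Proof.
  intros Ha Hb Hab.
  assert (Hnorm : is_lim_seq (fun N => norm (sum_n a N)) (norm la)).
  { exact (filterlim_comp _ _ _ (sum_n a) norm _ _ _ Ha (filterlim_norm la)). }
  apply (is_lim_seq_le _ _ (norm la) lb (fun N => Rle_trans _ _ _ (norm_sum_n_m a 0 N)
                                          (sum_n_m_le _ _ 0 N Hab)) Hnorm Hb).
Qed.

Lemma Cmod_INR n : Cmod (RtoC (INR n)) = INR n.
Proof. rewrite Cmod_R. apply Rabs_pos_eq, pos_INR. Qed.

Section Spread.
Context {K : AbsRing} {V : NormedModule K}.
Variable M : nat.
Hypothesis M_gt0 : (0 < M)%nat.

(* The coefficient sequence of [z |-> sum_m u_m z^(M m)]. *)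
Definition spread (u : nat -> V) (k : nat) : V :=
  if Nat.eqb (k mod M) 0 then u (k / M)%nat else zero.

Lemma spread_mul_add u q r :
  (r < M)%nat -> spread u (M * q + r) = if Nat.eqb r 0 then u q else zero.
Proof.
  intros Hr. unfold spread.
  now rewrite <- (Nat.mod_unique (M * q + r) M q r), <- (Nat.div_unique (M * q + r) M q r).
Qed.

Lemma spread_mul u q : spread u (M * q) = u q.
Proof. rewrite <- (Nat.add_0_r (M * q)) at 1. now rewrite spread_mul_add by lia. Qed.

Lemma spread_mul_add_pos u q r : (0 < r < M)%nat -> spread u (M * q + r) = zero.
Proof. intros Hr. rewrite spread_mul_add by lia. now destruct r; [lia|]. Qed.

Lemma spread_eq (u v : nat -> V) :
  (forall q, v (M * q)%nat = u q) ->
  (forall q r, (0 < r < M)%nat -> v (M * q + r)%nat = zero) ->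
  forall k, v k = spread u k.
Proof.
  intros Hmul Hrem k.
  rewrite (Nat.div_mod k M) by lia.
  pose proof (Nat.mod_upper_bound k M ltac:(lia)).
  rewrite spread_mul_add by lia.
  destruct (Nat.eqb_spec (k mod M) 0) as [E|E].
  - now rewrite E, Nat.add_0_r.
  - apply Hrem. lia.
Qed.

Lemma sum_n_spread u N : sum_n (spread u) N = sum_n u (N / M).
Proof.
  induction N as [|N IH].
  - rewrite Nat.Div0.div_0_l, !sum_O. unfold spread.
    now rewrite Nat.Div0.mod_0_l, Nat.Div0.div_0_l.
  - rewrite sum_Sn, IH.
    pose proof (Nat.div_mod (S N) M ltac:(lia)) as HSN.
    pose proof (Nat.mod_upper_bound (S N) M ltac:(lia)).
    set (q := (S N / M)%nat) in *. set (r := (S N mod M)%nat) in *.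
    unfold spread. fold q r.
    destruct (Nat.eqb_spec r 0) as [E|E].
    + assert (Hq : (0 < q)%nat) by (destruct q; lia).
      rewrite <- (Nat.div_unique N M (q - 1) (M - 1)) by nia.
      replace (sum_n u q) with (sum_n u (S (q - 1))) by (f_equal; lia).
      rewrite sum_Sn. now replace (S (q - 1)) with q by lia.
    + rewrite <- (Nat.div_unique N M q (r - 1)) by nia. apply plus_zero_r.
Qed.

Lemma is_series_spread u l : is_series u l -> is_series (spread u) l.
Proof.
  intros Hu. unfold is_series.
  apply (filterlim_ext (fun N => sum_n u (N / M))).
  { intros N. symmetry. apply sum_n_spread. }
  apply (filterlim_comp _ _ _ (fun N => (N / M)%nat) (sum_n u) _ eventually _); [|exact Hu].
  intros P [N0 HN0]. exists (M * N0)%nat. intros n Hn. apply HN0.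
  apply Nat.div_le_lower_bound; lia.
Qed.

End Spread.

Definition mpow (x : R) (m : nat) : R := INR m * x ^ m.

Lemma mpow_nonneg x m : 0 <= x -> 0 <= mpow x m.
Proof. intros Hx. apply Rmult_le_pos; [apply pos_INR|now apply pow_le]. Qed.

Lemma mpow_le_succ x m : 0 < x < 1 -> (INR m + 1) * (1 - x) <= 1 -> mpow x m <= mpow x (S m).
Proof.
  intros Hx H. unfold mpow. rewrite S_INR. simpl.
  assert (0 <= x ^ m) by (apply pow_le; lra).
  assert (INR m <= (INR m + 1) * x) by nra. nra.
Qed.

Lemma mpow_succ_le x m : 0 < x < 1 -> 1 < (INR m + 1) * (1 - x) -> mpow x (S m) <= mpow x m.
Proof.
  intros Hx H. unfold mpow. rewrite S_INR. simpl.
  assert (0 <= x ^ m) by (apply pow_le; lra).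
  assert ((INR m + 1) * x <= INR m) by nra. nra.
Qed.

Lemma mpow_le_argmax x k : 0 < x < 1 -> INR k * (1 - x) <= 1 < (INR k + 1) * (1 - x) ->
  forall m, mpow x m <= mpow x k.
Proof.
  intros Hx [Hk1 Hk2] m.
  assert (Hup : forall d, mpow x (k - d) <= mpow x k).
  { induction d as [|d IH]; [rewrite Nat.sub_0_r; lra|].
    destruct (Nat.le_gt_cases k d).
    - replace (k - S d)%nat with (k - d)%nat by lia. exact IH.
    - eapply Rle_trans; [|exact IH]. replace (k - d)%nat with (S (k - S d)) by lia.
      apply mpow_le_succ; auto. rewrite <- S_INR.
      assert (INR (S (k - S d)) <= INR k) by (apply le_INR; lia). nra. }
  assert (Hdown : forall d, mpow x (k + d) <= mpow x k).
  { induction d as [|d IH]; [rewrite Nat.add_0_r; lra|].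
    eapply Rle_trans; [|exact IH]. rewrite Nat.add_succ_r.
    apply mpow_succ_le; auto.
    assert (INR k <= INR (k + d)) by (apply le_INR; lia). nra. }
  destruct (Nat.le_gt_cases m k).
  - replace m with (k - (k - m))%nat by lia. apply Hup.
  - replace m with (k + (m - k))%nat by lia. apply Hdown.
Qed.

Lemma nu_of_spec (a : C) : 0 < Cmod a < 1 ->
  (2 <= nu_of a)%nat /\
  INR (nu_of a - 1) * (1 - Cmod a) <= 1 < (INR (nu_of a - 1) + 1) * (1 - Cmod a) /\
  INR (nu_of a) - 1 = INR (nu_of a - 1).
Proof.
  intros Hx. set (x := Cmod a) in *. unfold nu_of. fold x.
  unfold floor. destruct (floor_ex ((2 - x) / (1 - x))) as [z [Hz1 Hz2]]. simpl.
  assert (E : (2 - x) / (1 - x) * (1 - x) = 2 - x) by (field; lra).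
  assert (Hq : 2 < (2 - x) / (1 - x)).
  { apply Rmult_lt_reg_r with (1 - x); lra. }
  assert (Hz : (1 < z)%Z) by (apply lt_IZR; lra).
  assert (HI : INR (Z.to_nat z) = IZR z).
  { rewrite INR_IZR_INZ, Znat.Z2Nat.id by lia. reflexivity. }
  assert (Hk : INR (Z.to_nat z - 1) = IZR z - 1).
  { rewrite minus_INR by lia. rewrite HI. simpl. lra. }
  rewrite Hk, HI. split; [lia|]. split; [split|lra].
  - assert (IZR z * (1 - x) <= (2 - x) / (1 - x) * (1 - x)) by (apply Rmult_le_compat_r; lra).
    nra.
  - assert ((2 - x) / (1 - x) * (1 - x) < (IZR z + 1) * (1 - x)) by (apply Rmult_lt_compat_r; lra).
    nra.
Qed.

Lemma mpow_le_N_M (a : C) (M : nat) m : 0 < Cmod a < 1 -> INR M * mpow (Cmod a) m <= N_M a M.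
Proof.
  intros Ha. destruct (nu_of_spec a Ha) as [_ [Hnu Hnu1]].
  unfold N_M. eapply Rle_trans; [|apply Rmax_r].
  rewrite Hnu1, Rmult_assoc. apply Rmult_le_compat_l; [apply pos_INR|].
  exact (mpow_le_argmax _ _ Ha Hnu m).
Qed.

Definition sq_geom (r : R) (n : nat) : R := (INR n + 1) ^ 2 * r ^ n.

Lemma sq_geom_pos r n : 0 < r -> 0 < sq_geom r n.
Proof.
  intros Hr. unfold sq_geom. apply Rmult_lt_0_compat; [|now apply pow_lt].
  pose proof (pos_INR n). nra.
Qed.

Lemma ex_series_sq_geom r : 0 < r < 1 -> ex_series (sq_geom r).
Proof.
  intros Hr. apply ex_series_Rabs, (ex_series_DAlembert _ r); [lra| |].
  { intros n. apply Rgt_not_eq, sq_geom_pos. lra. }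
  assert (Hinv : is_lim_seq (fun n => / (INR n + 1)) 0).
  { apply (is_lim_seq_inv _ p_infty); [|discriminate].
    apply (is_lim_seq_ext (fun n => INR (S n))); [intros n; apply S_INR|].
    apply (is_lim_seq_incr_1 INR), is_lim_seq_INR. }
  assert (Hlim : is_lim_seq (fun n => (1 + / (INR n + 1)) * (1 + / (INR n + 1)) * r)
                   ((1 + 0) * (1 + 0) * r)).
  { apply is_lim_seq_mult'; [|apply is_lim_seq_const].
    apply is_lim_seq_mult'; apply is_lim_seq_plus'; auto; apply is_lim_seq_const. }
  replace (Finite r) with (Finite ((1 + 0) * (1 + 0) * r)) by (f_equal; ring).
  refine (is_lim_seq_ext _ _ _ _ Hlim). intros n.
  pose proof (pos_INR n). pose proof (pow_lt r n ltac:(lra)).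
  unfold sq_geom. rewrite S_INR. simpl pow.
  rewrite Rabs_pos_eq.
  - field. split; lra.
  - apply Rdiv_le_0_compat; [|nra]. apply Rmult_le_pos; nra.
Qed.

(* The factor [r] on the left avoids the exponent [n - 1] on the right. *)
Lemma pow_diff_bound (w h : C) (r : R) n : Cmod w <= r -> Cmod (w + h) <= r ->
  r * Cmod (Cpow (w + h) n - Cpow w n) <= INR n * Cmod h * r ^ n.
Proof.
  intros Hw Hwh. pose proof (Cmod_ge_0 w). pose proof (Cmod_ge_0 h).
  induction n as [|n IH].
  - simpl. replace (1 - 1)%C with (RtoC 0) by (apply injective_projections; simpl; ring).
    rewrite Cmod_0. lra.
  - replace (Cpow (w + h) (S n) - Cpow w (S n))%C with
      ((w + h) * (Cpow (w + h) n - Cpow w n) + h * Cpow w n)%C by (rewrite !Cpow_S; ring).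
    pose proof (Cmod_triangle ((w + h) * (Cpow (w + h) n - Cpow w n)) (h * Cpow w n)) as T.
    rewrite !Cmod_mult, Cmod_pow in T.
    assert (Hp : Cmod w ^ n <= r ^ n) by (apply pow_incr; lra).
    pose proof (Cmod_ge_0 (Cpow (w + h) n - Cpow w n)).
    rewrite S_INR. simpl pow.
    assert (r * (Cmod (w + h) * Cmod (Cpow (w + h) n - Cpow w n))
            <= r * (r * Cmod (Cpow (w + h) n - Cpow w n))).
    { apply Rmult_le_compat_l; [lra|]. apply Rmult_le_compat_r; auto. }
    assert (r * (Cmod h * Cmod w ^ n) <= r * (Cmod h * r ^ n)).
    { apply Rmult_le_compat_l; [lra|]. apply Rmult_le_compat_l; auto. }
    assert (r * (r * Cmod (Cpow (w + h) n - Cpow w n)) <= r * (INR n * Cmod h * r ^ n))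
      by (apply Rmult_le_compat_l; [lra|auto]).
    nra.
Qed.

Definition pow_taylor_rem (w h : C) (n : nat) : C :=
  (Cpow (w + h) (S n) - Cpow w (S n) - INR (S n) * Cpow w n * h)%C.

Lemma pow_taylor_rem_bound (w h : C) (r : R) n : Cmod w <= r -> Cmod (w + h) <= r ->
  r * Cmod (pow_taylor_rem w h n) <= (INR n + 1) ^ 2 * Cmod h ^ 2 * r ^ n.
Proof.
  intros Hw Hwh. pose proof (Cmod_ge_0 w). pose proof (Cmod_ge_0 h).
  induction n as [|n IH].
  - unfold pow_taylor_rem. simpl.
    replace ((w + h) * 1 - w * 1 - 1 * 1 * h)%C with (RtoC 0)
      by (apply injective_projections; simpl; ring).
    rewrite Cmod_0. simpl. nra.
  - replace (pow_taylor_rem w h (S n))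
      with (w * pow_taylor_rem w h n + h * (Cpow (w + h) (S n) - Cpow w (S n)))%C.
    2:{ unfold pow_taylor_rem. rewrite (S_INR (S n)), RtoC_plus.
        rewrite (Cpow_S (w + h) (S n)), (Cpow_S w (S n)), (Cpow_S w n). ring. }
    pose proof (Cmod_triangle (w * pow_taylor_rem w h n)
                  (h * (Cpow (w + h) (S n) - Cpow w (S n)))) as T.
    rewrite !Cmod_mult in T.
    pose proof (pow_diff_bound w h r (S n) Hw Hwh) as HD.
    pose proof (Cmod_ge_0 (pow_taylor_rem w h n)).
    pose proof (pos_INR n). pose proof (pow_le r n ltac:(lra)).
    rewrite S_INR in *. simpl pow in *.
    assert (r * (Cmod w * Cmod (pow_taylor_rem w h n)) <= r * (r * Cmod (pow_taylor_rem w h n))).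
    { apply Rmult_le_compat_l; [lra|]. apply Rmult_le_compat_r; auto. }
    assert (r * (r * Cmod (pow_taylor_rem w h n))
            <= r * ((INR n + 1) * ((INR n + 1) * 1) * (Cmod h * (Cmod h * 1)) * r ^ n))
      by (apply Rmult_le_compat_l; [lra|auto]).
    assert (r * (Cmod h * Cmod (Cpow (w + h) (S n) - Cpow w (S n)))
            <= Cmod h * ((INR n + 1) * Cmod h * (r * r ^ n))).
    { rewrite <- Rmult_assoc, (Rmult_comm r), Rmult_assoc. apply Rmult_le_compat_l; auto. }
    assert (0 <= Cmod h * Cmod h * r * r ^ n) by (repeat apply Rmult_le_pos; lra).
    nra.
Qed.

Lemma is_derive_of_quadratic_remainder (f : C -> C) w L B d : 0 < d -> 0 <= B ->
  (forall h, Cmod h < d -> Cmod (f (w + h) - f w - h * L)%C <= B * Cmod h ^ 2) ->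
  is_derive f w L.
Proof.
  intros Hd HB H. split; [apply is_linear_scal_l|].
  intros x Hx.
  apply (@is_filter_lim_locally_unique C_AbsRing (AbsRing_NormedModule C_AbsRing)) in Hx.
  subst x. intros eps.
  assert (Hp : 0 < Rmin d (eps / (B + 1))).
  { apply Rmin_pos; auto. apply Rdiv_lt_0_compat; [apply cond_pos|lra]. }
  exists (mkposreal _ Hp). intros y Hy.
  change (Cmod ((f y - f w) - (y - w) * L)%C <= eps * Cmod (y - w)%C).
  change (Cmod (y - w)%C < Rmin d (eps / (B + 1))) in Hy.
  set (h := (y - w)%C) in *. replace y with (w + h)%C by (unfold h; ring).
  assert (Hh1 : Cmod h < d) by (eapply Rlt_le_trans; [apply Hy|apply Rmin_l]).
  assert (Hh2 : Cmod h <= eps / (B + 1))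
    by (left; eapply Rlt_le_trans; [apply Hy|apply Rmin_r]).
  eapply Rle_trans; [apply H; auto|].
  pose proof (Cmod_ge_0 h). pose proof (cond_pos eps).
  assert ((B + 1) * Cmod h <= eps).
  { apply Rmult_le_reg_r with (/ (B + 1)); [apply Rinv_0_lt_compat; lra|].
    replace ((B + 1) * Cmod h * / (B + 1)) with (Cmod h) by (field; lra). exact Hh2. }
  simpl. nra.
Qed.

Section BoundedCoeffs.
Variables (c : nat -> C) (B : R) (w : C).
Hypothesis c_bounded : forall n, Cmod (c n) <= B.
Hypothesis w_in_disk : Cmod w < 1.

Let r := (1 + Cmod w) / 2.

Let r_bounds : Cmod w < r < 1.
Proof. pose proof (Cmod_ge_0 w). unfold r. lra. Qed.

Let B_ge0 : 0 <= B.
Proof. exact (Rle_trans _ _ _ (Cmod_ge_0 _) (c_bounded 0)). Qed.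

Lemma ex_series_deriv_coeffs : ex_series (fun m => (INR (S m) * c (S m) * Cpow w m)%C).
Proof.
  apply (@ex_series_le C_AbsRing C_CompleteNormedModule _ (fun m => B * sq_geom r m)).
  - intros m. change (Cmod (INR (S m) * c (S m) * Cpow w m)%C <= B * sq_geom r m).
    rewrite !Cmod_mult, Cmod_INR, Cmod_pow.
    pose proof r_bounds. pose proof B_ge0.
    pose proof (Cmod_ge_0 w). pose proof (Cmod_ge_0 (c (S m))). pose proof (pos_INR m).
    assert (Cmod w ^ m <= r ^ m) by (apply pow_incr; lra).
    assert (0 <= B * r ^ m) by (apply Rmult_le_pos; [lra|apply pow_le; lra]).
    assert (0 <= Cmod w ^ m) by (apply pow_le; lra).
    assert (Cmod (c (S m)) * Cmod w ^ m <= B * r ^ m)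
      by (apply Rmult_le_compat; auto).
    unfold sq_geom. rewrite S_INR. simpl pow. nra.
  - apply (ex_series_scal_l (V := R_NormedModule)), ex_series_sq_geom.
    pose proof r_bounds. pose proof (Cmod_ge_0 w). lra.
Qed.

Lemma is_series_pow_taylor_rem f h L :
  has_coeffs f c -> Cmod (w + h) < 1 ->
  is_series (fun m => (INR (S m) * c (S m) * Cpow w m)%C) L ->
  is_series (fun m => (c (S m) * pow_taylor_rem w h m)%C) (f (w + h) - f w - h * L)%C.
Proof.
  intros Hf Hwh HL.
  pose proof (is_series_minus _ _ _ _ (Hf _ Hwh) (Hf _ w_in_disk)) as Hdiff.
  assert (Hdiff1 : is_series (fun m => (c (S m) * Cpow (w + h) (S m) - c (S m) * Cpow w (S m))%C)
                     (f (w + h) - f w)%C).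
  { apply (is_series_incr_1 (fun n => (c n * Cpow (w + h) n - c n * Cpow w n)%C)).
    match goal with |- is_series _ ?v => replace v with (plus (f (w + h)%C) (opp (f w))) end.
    - exact Hdiff.
    - change ((f (w + h) + - f w)%C = (f (w + h) - f w + (c 0%nat * 1 - c 0%nat * 1))%C).
      ring. }
  refine (is_series_ext _ _ _ _ (is_series_minus _ _ _ _ Hdiff1 (is_series_scal h _ _ HL))).
  intros m. unfold pow_taylor_rem.
  change ((c (S m) * Cpow (w + h) (S m) - c (S m) * Cpow w (S m))
          + - (h * (INR (S m) * c (S m) * Cpow w m))
          = c (S m) * (Cpow (w + h) (S m) - Cpow w (S m) - INR (S m) * Cpow w m * h))%C.
  ring.
Qed.

Lemma is_derive_power_series f L :
  has_coeffs f c -> is_series (fun m => (INR (S m) * c (S m) * Cpow w m)%C) L ->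
  is_derive f w L.
Proof.
  intros Hf HL. pose proof r_bounds. pose proof B_ge0. pose proof (Cmod_ge_0 w).
  destruct (ex_series_sq_geom r ltac:(lra)) as [E HE].
  assert (HE0 : 0 <= E).
  { apply (is_series_nonneg (sq_geom r)); auto. intros n. apply Rlt_le, sq_geom_pos. lra. }
  apply (is_derive_of_quadratic_remainder _ _ _ (B * E / r) (r - Cmod w)); [lra| |].
  { apply Rmult_le_pos; [nra|]. apply Rlt_le, Rinv_0_lt_compat. lra. }
  intros h Hh.
  assert (Hwh : Cmod (w + h)%C <= r) by (pose proof (Cmod_triangle w h); lra).
  pose proof (is_series_pow_taylor_rem f h L Hf ltac:(lra) HL) as Hrem.
  assert (Hgeo : is_series (fun m => B * Cmod h ^ 2 / r * sq_geom r m) (B * Cmod h ^ 2 / r * E))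
    by (apply (is_series_scal_l (V := R_NormedModule)); exact HE).
  eapply Rle_trans; [apply (is_series_norm_le (V := C_NormedModule) _ _ _ _ Hrem Hgeo)|].
  - intros m. change (Cmod (c (S m) * pow_taylor_rem w h m)%C <= B * Cmod h ^ 2 / r * sq_geom r m).
    rewrite Cmod_mult.
    pose proof (pow_taylor_rem_bound w h r m ltac:(lra) Hwh) as Hm.
    pose proof (c_bounded (S m)). pose proof (Cmod_ge_0 (c (S m))).
    pose proof (Cmod_ge_0 (pow_taylor_rem w h m)).
    assert (Cmod (pow_taylor_rem w h m) <= Cmod h ^ 2 / r * sq_geom r m).
    { unfold sq_geom. apply Rmult_le_reg_l with r; [lra|].
      replace (r * (Cmod h ^ 2 / r * ((INR m + 1) ^ 2 * r ^ m)))
        with ((INR m + 1) ^ 2 * Cmod h ^ 2 * r ^ m) by (field; lra).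
      exact Hm. }
    replace (B * Cmod h ^ 2 / r * sq_geom r m) with (B * (Cmod h ^ 2 / r * sq_geom r m))
      by (unfold Rdiv; ring).
    apply Rmult_le_compat; auto.
  - right. field. lra.
Qed.

End BoundedCoeffs.

Lemma coeffs_geom_bound (e : nat -> C) :
  ex_series (fun n => (e n * Cpow (RtoC (/ 2)) n)%C) ->
  exists B, forall n, Cmod (e n) <= B * 2 ^ n.
Proof.
  intros Hex. set (t := fun n => (e n * Cpow (RtoC (/ 2)) n)%C).
  destruct (filterlim_bounded (K := C_AbsRing) (V := C_NormedModule) (sum_n t) Hex) as [Mb HMb].
  change (forall n, Cmod (sum_n t n) <= Mb) in HMb.
  assert (Ht : forall n, Cmod (t n) <= 2 * Mb).
  { intros n. pose proof (Rle_trans _ _ _ (Cmod_ge_0 _) (HMb 0%nat)).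
    destruct n as [|n].
    - rewrite <- (sum_O t). pose proof (HMb 0%nat). lra.
    - replace (t (S n)) with (sum_n t (S n) - sum_n t n)%C.
      2:{ rewrite sum_Sn. change ((sum_n t n + t (S n)) - sum_n t n = t (S n))%C. ring. }
      pose proof (HMb (S n)). pose proof (HMb n).
      pose proof (Cmod_triangle (sum_n t (S n)) (- sum_n t n)%C).
      rewrite Cmod_opp in *. unfold Cminus. lra. }
  exists (2 * Mb). intros n. specialize (Ht n).
  unfold t in Ht. rewrite Cmod_mult, Cmod_pow, Cmod_R, Rabs_pos_eq in Ht by lra.
  assert (E : (/ 2) ^ n * 2 ^ n = 1).
  { rewrite <- Rpow_mult_distr. replace (/ 2 * 2) with 1 by field. apply pow1. }
  pose proof (pow_lt 2 n ltac:(lra)).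
  replace (Cmod (e n)) with (Cmod (e n) * (/ 2) ^ n * 2 ^ n) by (rewrite Rmult_assoc, E; ring).
  apply Rmult_le_compat_r; lra.
Qed.

Lemma Rle_linear_small_eq0 x K : 0 <= x -> (forall t, 0 < t <= / 4 -> x <= K * t) -> x = 0.
Proof.
  intros Hx H. destruct (Req_dec x 0) as [|Hne]; [assumption|exfalso].
  pose proof (Rabs_pos K).
  set (t := Rmin (/ 4) (x / (2 * (Rabs K + 1)))).
  assert (Ht : 0 < t) by (apply Rmin_pos; [lra|apply Rdiv_lt_0_compat; lra]).
  specialize (H t (conj Ht (Rmin_l _ _))).
  assert (K * t <= Rabs K * t) by (apply Rmult_le_compat_r; [lra|apply Rle_abs]).
  assert (Rabs K * t <= Rabs K * (x / (2 * (Rabs K + 1))))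
    by (apply Rmult_le_compat_l; [lra|apply Rmin_r]).
  assert (Rabs K * (x / (2 * (Rabs K + 1))) < x).
  { apply Rmult_lt_reg_r with (2 * (Rabs K + 1)); [lra|].
    replace (Rabs K * (x / (2 * (Rabs K + 1))) * (2 * (Rabs K + 1))) with (Rabs K * x)
      by (field; lra).
    nra. }
  lra.
Qed.

Section ZeroPowerSeries.
Variable e : nat -> C.
Hypothesis e_sum_zero : forall z, Cmod z < 1 -> is_series (fun n => (e n * Cpow z n)%C) (RtoC 0).

(* Dividing the tail [sum_(n >= k) e_n t^n = 0] by [t^k] bounds [|e_k|] linearly in [t]. *)
Lemma leading_coeff_le B k : (forall n, Cmod (e n) <= B * 2 ^ n) ->
  (forall j, (j < k)%nat -> e j = RtoC 0) ->
  forall t, 0 < t <= / 4 -> Cmod (e k) <= B * 2 ^ (S (S k)) * t.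
Proof.
  intros Hg Hlow t Ht.
  assert (HB : 0 <= B) by (pose proof (Rle_trans _ _ _ (Cmod_ge_0 _) (Hg 0%nat)); simpl in *; lra).
  assert (Hz : Cmod (RtoC t) < 1) by (rewrite Cmod_R, Rabs_pos_eq; lra).
  set (a := fun n => (e n * Cpow (RtoC t) n)%C).
  assert (Hbelow : forall j, (j < k)%nat -> a j = zero).
  { intros j Hj. unfold a. rewrite Hlow by auto. change (0 * Cpow t j = 0)%C. ring. }
  assert (Htail : is_series (fun j => a (S k + j)%nat) (opp (a k))).
  { apply is_series_incr_n; [lia|]. simpl pred.
    match goal with |- is_series _ ?v => replace v with (RtoC 0) end; [exact (e_sum_zero _ Hz)|].
    transitivity (plus (opp (a k)) (a k)).
    - change (RtoC 0 = (- a k + a k)%C). ring.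
    - f_equal. symmetry. apply sum_n_eq_last, Hbelow. }
  assert (Hgeo : is_series (fun j => B * (2 * t) ^ (S k) * (2 * t) ^ j)
                   (B * (2 * t) ^ (S k) * / (1 - 2 * t))).
  { apply (is_series_scal_l (V := R_NormedModule)), is_series_geom.
    rewrite Rabs_pos_eq; lra. }
  assert (Hle : Cmod (opp (a k)) <= B * (2 * t) ^ S k * / (1 - 2 * t)).
  { apply (is_series_norm_le (V := C_NormedModule) _ _ _ _ Htail Hgeo). intros j.
    change (Cmod (a (S k + j)%nat) <= B * (2 * t) ^ S k * (2 * t) ^ j).
    unfold a. rewrite Cmod_mult, Cmod_pow, Cmod_R, Rabs_pos_eq by lra.
    pose proof (pow_le t (S k + j) ltac:(lra)).
    eapply Rle_trans; [apply Rmult_le_compat_r; [auto|apply Hg]|].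
    right. rewrite Rmult_assoc, <- Rpow_mult_distr, Rmult_assoc, <- pow_add, Rpow_mult_distr.
    ring. }
  change (Cmod (- a k)%C <= B * (2 * t) ^ S k * / (1 - 2 * t)) in Hle.
  unfold a in Hle. rewrite Cmod_opp, Cmod_mult, Cmod_pow, Cmod_R, Rabs_pos_eq in Hle by lra.
  pose proof (pow_lt t k ltac:(lra)). pose proof (pow_lt 2 k ltac:(lra)).
  rewrite Rpow_mult_distr in Hle. simpl pow in Hle |- *.
  assert (Hinv : / (1 - 2 * t) <= 2).
  { apply Rmult_le_reg_l with (1 - 2 * t); [lra|]. rewrite Rinv_r by lra. lra. }
  apply Rmult_le_reg_r with (t ^ k); [lra|].
  eapply Rle_trans; [exact Hle|].
  assert (0 <= B * (2 * 2 ^ k * (t * t ^ k))).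
  { apply Rmult_le_pos; [lra|]. apply Rmult_le_pos; [lra|]. apply Rmult_le_pos; lra. }
  apply Rle_trans with (B * (2 * 2 ^ k * (t * t ^ k)) * 2); [apply Rmult_le_compat_l; auto|].
  right. ring.
Qed.

Lemma power_series_zero_coeffs : forall n, e n = RtoC 0.
Proof.
  destruct (coeffs_geom_bound e) as [B Hg].
  { exists (RtoC 0). apply e_sum_zero. rewrite Cmod_R, Rabs_pos_eq; lra. }
  intros n. induction n as [k IH] using (well_founded_induction lt_wf).
  apply Cmod_eq_0, (Rle_linear_small_eq0 _ (B * 2 ^ S (S k))); [apply Cmod_ge_0|].
  apply leading_coeff_le; auto.
Qed.

End ZeroPowerSeries.

Lemma has_coeffs_unique (f g : C -> C) (c d : nat -> C) :
  (forall z, Cmod z < 1 -> f z = g z) -> has_coeffs f c -> has_coeffs g d ->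
  forall n, c n = d n.
Proof.
  intros Hfg Hc Hd n.
  assert (Hzero : forall n, (c n - d n)%C = RtoC 0).
  { apply power_series_zero_coeffs. intros z Hz.
    pose proof (is_series_minus _ _ _ _ (Hc z Hz) (Hd z Hz)) as H.
    rewrite (Hfg z Hz) in H.
    replace (RtoC 0) with (plus (g z) (opp (g z))) by (change ((g z + - g z)%C = RtoC 0); ring).
    refine (is_series_ext _ _ _ _ H). intros m.
    change ((c m * Cpow z m + - (d m * Cpow z m))%C = ((c m - d m) * Cpow z m)%C). ring. }
  replace (c n) with ((c n - d n) + d n)%C by ring. rewrite Hzero. ring.
Qed.

Lemma S2_weight_nonneg c n : 0 <= S2_weight c n.
Proof. unfold S2_weight. apply Rmult_le_pos; apply pow2_ge_0. Qed.

Lemma S2_coeff_bound c s : is_series (S2_weight c) s ->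
  forall n, Cmod (c n) <= 1 + s + Cmod (c 0%nat).
Proof.
  intros Hs n. pose proof (is_series_term_le _ _ (S2_weight_nonneg c) Hs) as Hterm.
  pose proof (Hterm 0%nat). pose proof (S2_weight_nonneg c 0). pose proof (Cmod_ge_0 (c 0%nat)).
  destruct n as [|n]; [lra|].
  specialize (Hterm (S n)). unfold S2_weight in Hterm.
  assert (1 <= INR (S n)) by (rewrite S_INR; pose proof (pos_INR n); lra).
  pose proof (Cmod_ge_0 (c (S n))). pose proof (pow2_ge_0 (Cmod (c (S n)))).
  assert (Cmod (c (S n)) ^ 2 <= s).
  { apply Rle_trans with (INR (S n) ^ 2 * Cmod (c (S n)) ^ 2); [|exact Hterm].
    rewrite <- (Rmult_1_l (Cmod (c (S n)) ^ 2)) at 1.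
    apply Rmult_le_compat_r; [apply pow2_ge_0|nra]. }
  simpl in *. nra.
Qed.

Lemma choice_on_disk (P : C -> C -> Prop) :
  (forall z, Cmod z < 1 -> exists L, P z L) ->
  exists g : C -> C, forall z, Cmod z < 1 -> P z (g z).
Proof.
  intros H.
  assert (H' : forall z, exists L, Cmod z < 1 -> P z L).
  { intros z. destruct (classic (Cmod z < 1)) as [Hz|Hz].
    - destruct (H z Hz) as [L HL]. now exists L.
    - exists (RtoC 0). intros. contradiction. }
  exists (fun z => proj1_sig (constructive_indefinite_description _ (H' z))).
  intros z Hz. destruct (constructive_indefinite_description _ (H' z)) as [L HL]. auto.
Qed.

Definition pow_map (a : C) (M : nat) (z : C) : C := (a * Cpow z M)%C.

Lemma Cmod_pow_map_lt1 a M z : Cmod a < 1 -> Cmod z < 1 -> Cmod (pow_map a M z) < 1.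
Proof.
  intros Ha Hz. unfold pow_map. rewrite Cmod_mult, Cmod_pow.
  pose proof (Cmod_ge_0 a). pose proof (Cmod_ge_0 z).
  assert (Cmod z ^ M <= 1) by (rewrite <- (pow1 M); apply pow_incr; lra).
  assert (0 <= Cmod z ^ M) by (apply pow_le; lra).
  nra.
Qed.

Definition Dphi_coeff (a : C) (c : nat -> C) (m : nat) : C :=
  (INR (S m) * c (S m) * Cpow a m)%C.

Definition Dphi_coeffs (a : C) (M : nat) (c : nat -> C) : nat -> C :=
  spread (V := C_NormedModule) M (Dphi_coeff a c).

Definition Dphi_weight (a : C) (M : nat) (c : nat -> C) (m : nat) : R :=
  INR (M * m) ^ 2 * Cmod (Dphi_coeff a c m) ^ 2.

Definition monomial (b : C) (n j : nat) : C := if Nat.eqb j n then b else RtoC 0.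

Lemma monomial_eq b n : monomial b n n = b.
Proof. unfold monomial. now rewrite Nat.eqb_refl. Qed.

Lemma monomial_neq b n j : j <> n -> monomial b n j = RtoC 0.
Proof. intros Hj. unfold monomial. now rewrite (proj2 (Nat.eqb_neq j n) Hj). Qed.

Lemma has_coeffs_monomial b n : has_coeffs (fun z => (b * Cpow z n)%C) (monomial b n).
Proof.
  intros z Hz. rewrite <- (monomial_eq b n) at 1.
  apply (is_series_single (V := C_NormedModule) (fun j => (monomial b n j * Cpow z j)%C)).
  intros j Hj. rewrite monomial_neq by auto. change (RtoC 0 * Cpow z j = RtoC 0)%C. ring.
Qed.

Lemma is_series_S2_weight_monomial b n :
  is_series (S2_weight (monomial b n)) (INR n ^ 2 * Cmod b ^ 2).
Proof.
  rewrite <- (monomial_eq b n) at 2.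
  apply (is_series_single (V := R_NormedModule) (S2_weight (monomial b n))).
  intros j Hj. unfold S2_weight. rewrite monomial_neq, Cmod_0 by auto.
  change (INR j ^ 2 * 0 ^ 2 = 0). ring.
Qed.

Definition Dphi_ball_norm (phi : C -> C) (r : R) : Prop :=
  exists f g rf, in_S2 f /\ is_S2norm f rf /\ rf <= 1 /\
    is_Dphi phi f g /\ in_S2 g /\ is_S2norm g r.

Section DphiPowMap.
Variables (a : C) (M : nat).
Hypothesis a_in_disk : 0 < Cmod a < 1.
Hypothesis M_gt0 : (0 < M)%nat.

Lemma Dphi_coeffs_0 c : Dphi_coeffs a M c 0%nat = c 1%nat.
Proof.
  pose proof (spread_mul (V := C_NormedModule) M M_gt0 (Dphi_coeff a c) 0) as E.
  rewrite Nat.mul_0_r in E. unfold Dphi_coeffs. rewrite E. unfold Dphi_coeff. simpl. ring.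
Qed.

Lemma Dphi_has_coeffs f c B : has_coeffs f c -> (forall n, Cmod (c n) <= B) ->
  exists g, is_Dphi (pow_map a M) f g /\ has_coeffs g (Dphi_coeffs a M c).
Proof.
  intros Hf Hc.
  assert (Hphi : forall z, Cmod z < 1 -> Cmod (pow_map a M z) < 1)
    by (intros z; apply Cmod_pow_map_lt1; lra).
  destruct (choice_on_disk (fun z L =>
      is_series (fun m => (INR (S m) * c (S m) * Cpow (pow_map a M z) m)%C) L)) as [g Hg].
  { intros z Hz. apply (ex_series_deriv_coeffs c B); auto. }
  exists g. split.
  - intros z Hz. apply (is_derive_power_series c B); auto.
  - intros z Hz.
    assert (Hlac : is_series (fun m => (Dphi_coeff a c m * Cpow z (M * m))%C) (g z)).
    { refine (is_series_ext _ _ _ _ (Hg z Hz)). intros m. unfold Dphi_coeff, pow_map.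
      rewrite Cpow_mult_l, Cpow_mult_r. apply Cmult_assoc. }
    refine (is_series_ext _ _ _ _ (is_series_spread M M_gt0 _ _ Hlac)). intros k. symmetry.
    unfold Dphi_coeffs. revert k. apply (spread_eq M M_gt0).
    + intros q. now rewrite spread_mul.
    + intros q r Hr. rewrite spread_mul_add_pos by lia.
      change (RtoC 0 * Cpow z (M * q + r) = RtoC 0)%C. ring.
Qed.

Lemma is_series_S2_weight_Dphi_coeffs c T :
  is_series (Dphi_weight a M c) T -> is_series (S2_weight (Dphi_coeffs a M c)) T.
Proof.
  intros HT.
  refine (is_series_ext _ _ _ _ (is_series_spread (V := R_NormedModule) M M_gt0 _ _ HT)).
  intros k. symmetry. revert k. apply (spread_eq (V := R_NormedModule) M M_gt0).
  - intros q. unfold S2_weight, Dphi_weight, Dphi_coeffs. now rewrite spread_mul.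
  - intros q r Hr. unfold S2_weight, Dphi_coeffs. rewrite spread_mul_add_pos by lia.
    change (INR (M * q + r) ^ 2 * Cmod (RtoC 0) ^ 2 = 0). rewrite Cmod_0. ring.
Qed.

Lemma Dphi_weight_le c m : Dphi_weight a M c m <= N_M a M ^ 2 * S2_weight c (S m).
Proof.
  unfold Dphi_weight, Dphi_coeff, S2_weight.
  rewrite !Cmod_mult, Cmod_INR, Cmod_pow, mult_INR.
  replace ((INR M * INR m) ^ 2 * (INR (S m) * Cmod (c (S m)) * Cmod a ^ m) ^ 2)
    with ((INR M * mpow (Cmod a) m) ^ 2 * (INR (S m) ^ 2 * Cmod (c (S m)) ^ 2))
    by (unfold mpow; ring).
  apply Rmult_le_compat_r; [apply Rmult_le_pos; apply pow2_ge_0|].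
  apply pow_incr. split; [|apply mpow_le_N_M; auto].
  apply Rmult_le_pos; [apply pos_INR|apply mpow_nonneg, Cmod_ge_0].
Qed.

Lemma ex_series_Dphi_weight c s : is_series (S2_weight c) s -> ex_series (Dphi_weight a M c).
Proof.
  intros Hs.
  apply (@ex_series_le R_AbsRing R_CompleteNormedModule _
           (fun m => N_M a M ^ 2 * S2_weight c (S m))).
  - intros m. change (Rabs (Dphi_weight a M c m) <= N_M a M ^ 2 * S2_weight c (S m)).
    rewrite Rabs_pos_eq; [apply Dphi_weight_le|].
    unfold Dphi_weight. apply Rmult_le_pos; apply pow2_ge_0.
  - apply (ex_series_scal_l (V := R_NormedModule)), (ex_series_incr_1 (S2_weight c)).
    now exists s.
Qed.

(* The constant term [c_1] of [D_phi f] is paid for by the weight [1^2 |c_1|^2] of [f]. *)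
Lemma Dphi_norm_sq_le c s T : is_series (S2_weight c) s -> is_series (Dphi_weight a M c) T ->
  Cmod (c 1%nat) ^ 2 + T <= N_M a M ^ 2 * s.
Proof.
  intros Hs HT.
  set (N := N_M a M). assert (HN : 1 <= N) by apply Rmax_l.
  set (e0 := fun m => if Nat.eqb m 0 then Cmod (c 1%nat) ^ 2 else 0).
  assert (He0 : is_series e0 (Cmod (c 1%nat) ^ 2)).
  { apply (is_series_single (V := R_NormedModule) e0 0). intros [|j] Hj; [lia|reflexivity]. }
  assert (Hlhs : is_series (fun m => plus (e0 m) (Dphi_weight a M c m))
                   (plus (Cmod (c 1%nat) ^ 2) T))
    by (apply (is_series_plus (K := R_AbsRing) (V := R_NormedModule)); auto).
  assert (Hrhs : is_series (fun m => N ^ 2 * S2_weight c (S m)) (N ^ 2 * s)).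
  { apply (is_series_scal_l (V := R_NormedModule)), (is_series_incr_1 (S2_weight c)).
    replace (plus s (S2_weight c 0%nat)) with s; [exact Hs|].
    change (s = s + S2_weight c 0%nat). unfold S2_weight. simpl INR.
    replace (0 ^ 2 * Cmod (c 0%nat) ^ 2) with 0 by ring. now rewrite Rplus_0_r. }
  apply (is_series_le _ _ _ _ Hlhs Hrhs). intros m.
  change (e0 m + Dphi_weight a M c m <= N ^ 2 * S2_weight c (S m)).
  pose proof (Dphi_weight_le c m) as Hm. fold N in Hm.
  destruct m as [|m]; [|unfold e0; cbn [Nat.eqb]; lra].
  unfold e0, Dphi_weight, S2_weight. rewrite Nat.mul_0_r. simpl.
  assert (1 <= N * N) by nra. pose proof (pow2_ge_0 (Cmod (c 1%nat))). simpl in *. nra.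
Qed.

Lemma Dphi_in_S2 f : in_S2 f -> exists g, is_Dphi (pow_map a M) f g /\ in_S2 g.
Proof.
  intros [c [Hc [s Hs]]].
  destruct (Dphi_has_coeffs f c _ Hc (S2_coeff_bound c s Hs)) as [g [Hd Hg]].
  destruct (ex_series_Dphi_weight c s Hs) as [T HT].
  exists g. split; auto. exists (Dphi_coeffs a M c). split; auto.
  exists T. now apply is_series_S2_weight_Dphi_coeffs.
Qed.

Lemma Dphi_norm_le f g rf r : is_S2norm f rf -> rf <= 1 ->
  is_Dphi (pow_map a M) f g -> is_S2norm g r -> r <= N_M a M.
Proof.
  intros [c [s [Hc [Hs ->]]]] Hrf Hd [d [T' [Hgd [HT' ->]]]].
  destruct (Dphi_has_coeffs f c _ Hc (S2_coeff_bound c s Hs)) as [G [HG HGc]].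
  destruct (ex_series_Dphi_weight c s Hs) as [T HT].
  assert (HgG : forall z, Cmod z < 1 -> g z = G z).
  { intros z Hz. rewrite <- (is_C_derive_unique _ _ _ (Hd z Hz)).
    exact (is_C_derive_unique _ _ _ (HG z Hz)). }
  pose proof (has_coeffs_unique g G d (Dphi_coeffs a M c) HgG Hgd HGc) as Hd_eq.
  assert (ET : T' = T).
  { rewrite <- (is_series_unique _ _ HT'), <- (is_series_unique _ _ (is_series_S2_weight_Dphi_coeffs c T HT)).
    apply Series_ext. intros n. unfold S2_weight. now rewrite Hd_eq. }
  rewrite ET, Hd_eq, Dphi_coeffs_0.
  pose proof (Dphi_norm_sq_le c s T Hs HT) as Hsq.
  assert (HN : 1 <= N_M a M) by apply Rmax_l.
  pose proof (is_series_nonneg _ _ (S2_weight_nonneg c) Hs).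
  pose proof (pow2_ge_0 (Cmod (c 0%nat))).
  apply Rle_trans with (sqrt (N_M a M ^ 2 * (Cmod (c 0%nat) ^ 2 + s))).
  - apply sqrt_le_1_alt. nra.
  - rewrite sqrt_mult_alt, sqrt_pow2 by nra.
    pose proof (sqrt_pos (Cmod (c 0%nat) ^ 2 + s)). nra.
Qed.

Lemma is_series_Dphi_weight_monomial b n : (1 <= n)%nat ->
  is_series (Dphi_weight a M (monomial b n)) ((INR M * mpow (Cmod a) (n - 1) * INR n * Cmod b) ^ 2).
Proof.
  intros Hn.
  replace ((INR M * mpow (Cmod a) (n - 1) * INR n * Cmod b) ^ 2)
    with (Dphi_weight a M (monomial b n) (n - 1)).
  - apply (is_series_single (V := R_NormedModule)). intros j Hj.
    unfold Dphi_weight, Dphi_coeff. rewrite monomial_neq by lia.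
    rewrite !Cmod_mult, Cmod_0. change (INR (M * j) ^ 2 * (Cmod (INR (S j)) * 0 * Cmod (Cpow a j)) ^ 2 = 0).
    ring.
  - unfold Dphi_weight, Dphi_coeff, mpow. replace (S (n - 1)) with n by lia.
    rewrite monomial_eq, !Cmod_mult, Cmod_INR, Cmod_pow, mult_INR. ring.
Qed.

Lemma Dphi_ball_norm_monomial n : (1 <= n)%nat ->
  Dphi_ball_norm (pow_map a M)
    (sqrt ((if Nat.eqb n 1 then 1 else 0) + (INR M * mpow (Cmod a) (n - 1)) ^ 2)).
Proof.
  intros Hn.
  assert (HnR : 0 < INR n) by (apply lt_0_INR; lia).
  set (b := RtoC (/ INR n)).
  assert (Hb : INR n * Cmod b = 1).
  { unfold b. rewrite Cmod_R, Rabs_pos_eq by (apply Rlt_le, Rinv_0_lt_compat; lra). field. lra. }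
  set (c := monomial b n).
  assert (Hc : has_coeffs (fun z => (b * Cpow z n)%C) c) by apply has_coeffs_monomial.
  assert (Hs : is_series (S2_weight c) 1).
  { replace 1 with (INR n ^ 2 * Cmod b ^ 2) by (rewrite <- Rpow_mult_distr, Hb; ring).
    apply is_series_S2_weight_monomial. }
  assert (HcB : forall j, Cmod (c j) <= Cmod b).
  { intros j. unfold c, monomial. destruct (Nat.eqb j n); [lra|rewrite Cmod_0; apply Cmod_ge_0]. }
  destruct (Dphi_has_coeffs _ c _ Hc HcB) as [g [Hd Hg]].
  pose proof (is_series_Dphi_weight_monomial b n Hn) as HT. rewrite Rmult_assoc, Hb, Rmult_1_r in HT.
  pose proof (is_series_S2_weight_Dphi_coeffs c _ HT) as HgT.
  exists (fun z => (b * Cpow z n)%C), g, 1.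
  split; [|split; [|split; [|split; [|split]]]].
  - exists c. split; auto. now exists 1.
  - exists c, 1. split; [|split]; auto.
    unfold c. rewrite monomial_neq, Cmod_0 by lia. rewrite <- sqrt_1 at 1. f_equal. ring.
  - lra.
  - exact Hd.
  - exists (Dphi_coeffs a M c). split; auto. eexists; eauto.
  - exists (Dphi_coeffs a M c), ((INR M * mpow (Cmod a) (n - 1)) ^ 2).
    split; [|split]; auto. do 2 f_equal.
    rewrite Dphi_coeffs_0. unfold c, monomial. destruct (Nat.eqb_spec 1 n) as [<-|Hn1].
    + rewrite Nat.eqb_refl. simpl INR in Hb. rewrite Rmult_1_l in Hb. rewrite Hb. ring.
    + rewrite (proj2 (Nat.eqb_neq n 1)) by lia. rewrite Cmod_0. ring.
Qed.

Lemma Dphi_ball_norm_1 : Dphi_ball_norm (pow_map a M) 1.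
Proof.
  pose proof (Dphi_ball_norm_monomial 1 (le_n 1)) as H. simpl in H.
  replace (sqrt (1 + (INR M * mpow (Cmod a) 0) * ((INR M * mpow (Cmod a) 0) * 1))) with 1 in H;
    [exact H|].
  unfold mpow. simpl INR. rewrite <- sqrt_1 at 1. f_equal. ring.
Qed.

Lemma Dphi_ball_norm_mpow k : (1 <= k)%nat ->
  Dphi_ball_norm (pow_map a M) (INR M * mpow (Cmod a) k).
Proof.
  intros Hk. pose proof (Dphi_ball_norm_monomial (S k) ltac:(lia)) as H.
  rewrite (proj2 (Nat.eqb_neq (S k) 1)) in H by lia.
  rewrite Nat.sub_1_r, Rplus_0_l, sqrt_pow2 in H.
  - exact H.
  - apply Rmult_le_pos; [apply pos_INR|apply mpow_nonneg, Cmod_ge_0].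
Qed.

End DphiPowMap.

Lemma N_M_mpow (a : C) (M : nat) : 0 < Cmod a < 1 ->
  N_M a M = Rmax 1 (INR M * mpow (Cmod a) (nu_of a - 1)).
Proof.
  intros Ha. destruct (nu_of_spec a Ha) as [_ [_ Hnu]].
  unfold N_M, mpow. now rewrite Hnu, Rmult_assoc.
Qed.

Theorem theorem5p1 (a : C) (M : nat) :
  0 < Cmod a < 1 -> (0 < M)%nat ->
  let phi := fun z : C => (a * Cpow z M)%C in
  (forall f, in_S2 f -> exists g, is_Dphi phi f g /\ in_S2 g) /\
  Dphi_opnorm phi = Finite (N_M a M).
Proof.
  intros Ha HM phi. split; [exact (Dphi_in_S2 a M Ha HM)|].
  change (Lub_Rbar (Dphi_ball_norm (pow_map a M)) = Finite (N_M a M)).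
  apply is_lub_Rbar_unique. split.
  - intros r (f & g & rf & _ & Hf & Hrf & Hd & _ & Hg).
    exact (Dphi_norm_le a M Ha HM f g rf r Hf Hrf Hd Hg).
  - intros b Hb. apply Hb.
    destruct (nu_of_spec a Ha) as [Hnu _].
    rewrite N_M_mpow by exact Ha. unfold Rmax.
    destruct (Rle_dec 1 (INR M * mpow (Cmod a) (nu_of a - 1))).
    + apply Dphi_ball_norm_mpow; auto. lia.
    + apply Dphi_ball_norm_1; auto.
Qed.
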